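(* Let $u$ be a drift function and $\alpha>0$. Then for every $f\in\mathcal E^1_u$ and every $x\in\mathbf X$, \[\frac{1}{n^{1+\alpha}}f(X_n)\xrightarrow[n\to\infty]{}0\quad\mathbb P_x\text{-a.s. and in }\mathrm L^1(\mathbb P_x).\]
   Context: $(X_n)$ Markov chain on a complete separable metric space $\mathbf X$, $\mathbb P_x$ its law from $x$, $Pf(x)=\mathbb E_xf(X_1)$. $\tau$ is a $\theta$-compatible stopping time ($\mathbb P_x(\tau=0)=0$ and $\mathbb P_x$-a.s. $\tau\ge2\Rightarrow\tau\circ\theta=\tau-1$) with $\mathbb E_x\tau<\infty$ for all $x$; $Qf(x)=\mathbb E_x[f(X_\tau)\mathbf 1_{\tau<\infty}]$. A drift function is a Borel $u:\mathbf X\to[1,\infty)$ such that $u-Pu$ is bounded below and $Qu$, $x\mapsto\mathbb E_x\tau/u(x)$ and $P(u-Pu+B_u)/(u-Pu+B_u)$ are bounded on $\mathbf X$, where $B_u=\sup(Pu-u)+1$. For Borel $v\ge1$, $\mathcal F^p_v$ is the space of Borel $f$ with $\sup|f|^p/v<\infty$; $\mathcal E^p_u:=\mathcal F^p_{u-Pu+B_u}$. *)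

From HB Require Import structures.
From mathcomp Require Import all_boot all_order all_algebra.
From mathcomp Require Import all_classical all_reals all_analysis measurable_realfun.

Set Implicit Arguments.
Unset Strict Implicit.
Unset Printing Implicit Defensive.

Import Order.TTheory GRing.Theory Num.Theory.
Import numFieldNormedType.Exports.
Local Open Scope classical_set_scope.
Local Open Scope ring_scope.

Definition borelT (T : ptopologicalType) := g_sigma_algebraType (@open T).

Definition separable_space (T : topologicalType) : Prop :=
  exists S : set T, countable S /\ dense S.

Section MarkovSetting.
Context {R : realType} {dX dO : measure_display}
  {X : measurableType dX} {Om : measurableType dO}.

Definition natfilt (Xn : nat -> Om -> X) (n : nat) : set (set Om) :=
  <<s [set A | exists k, (k <= n)%N /\
        exists2 B, measurable B & A = Xn k @^-1` B] >>.

(* (Om, Xn, theta, (P x)_x) is the Markov chain with laws P_x, where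
   theta is the shift operator: X_n o theta = X_{n+1}, P_x(X_0 = x) = 1,
   x |-> P_x(B) is measurable, and the (simple) Markov property holds:
   for every A in F_n and measurable B,
   P_x(A /\ theta^{-n} B) = E_x[1_A P_{X_n}(B)]. *)
Definition markov_chain (Xn : nat -> Om -> X) (theta : Om -> Om)
    (P : X -> probability Om R) : Prop :=
  [/\ (forall n, measurable_fun setT (Xn n)) /\ measurable_fun setT theta,
      (forall n w, Xn n.+1 w = Xn n (theta w)),
      (forall x B, measurable B ->
          P x (Xn 0 @^-1` B) = ((x \in B)%:R)%:E),
      (forall B, measurable B -> measurable_fun setT ((fun x => P x B) : X -> \bar R)) &
      (forall x n A B, natfilt Xn n A -> measurable B ->
          P x (A `&` (iter n theta) @^-1` B) =
          (\int[P x]_(w in A) P (Xn n w) B)%E)].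

(* stopping times valued in N u {oo} (None = +oo) *)
Definition stopping_time (Xn : nat -> Om -> X) (tau : Om -> option nat) :=
  forall n, natfilt Xn n [set w | tau w = Some n].

Definition theta_compatible (theta : Om -> Om) (tau : Om -> option nat)
    (P : X -> probability Om R) :=
  forall x, P x [set w | tau w = Some 0%N] = 0%E /\
    {ae P x, forall w, match tau w with
                       | Some k => (2 <= k)%N -> tau (theta w) = Some k.-1
                       | None => tau (theta w) = None
                       end}.

Definition tauE (t : option nat) : \bar R :=
  if t is Some k then (k%:R)%:E else +oo%E.

Definition Etau (tau : Om -> option nat) (P : X -> probability Om R) (x : X)
  : \bar R := (\int[P x]_w tauE (tau w))%E.

Definition Pop (Xn : nat -> Om -> X) (P : X -> probability Om R)
    (f : X -> R) (x : X) : \bar R := (\int[P x]_w (f (Xn 1%N w))%:E)%E.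

Definition Qop (Xn : nat -> Om -> X) (tau : Om -> option nat)
    (P : X -> probability Om R) (f : X -> R) (x : X) : \bar R :=
  (\int[P x]_w (if tau w is Some k then (f (Xn k w))%:E else 0%E))%E.

Definition Bu (Xn : nat -> Om -> X) (P : X -> probability Om R) (u : X -> R)
  : \bar R := (ereal_sup (range (fun x => Pop Xn P u x - (u x)%:E)) + 1)%E.

(* u - Pu + B_u (real valued whenever u is a drift function) *)
Definition wu (Xn : nat -> Om -> X) (P : X -> probability Om R) (u : X -> R)
  (x : X) : R := u x - fine (Pop Xn P u x) + fine (Bu Xn P u).

Definition drift_function (Xn : nat -> Om -> X) (tau : Om -> option nat)
    (P : X -> probability Om R) (u : X -> R) : Prop :=
  [/\ measurable_fun setT u /\ (forall x, 1 <= u x),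
      (exists c : R, forall x, (c%:E <= (u x)%:E - Pop Xn P u x)%E),
      (exists c : R, forall x, (Qop Xn tau P u x <= c%:E)%E),
      (exists c : R, forall x, (Etau tau P x <= c%:E * (u x)%:E)%E) &
      (exists c : R, forall x,
          (Pop Xn P (wu Xn P u) x <= c%:E * (wu Xn P u x)%:E)%E)].

Definition Fspace (p : R) (v : X -> R) (f : X -> R) : Prop :=
  measurable_fun setT f /\ exists c : R, forall x, `|f x| `^ p <= c * v x.

Definition Espace (Xn : nat -> Om -> X) (P : X -> probability Om R)
    (p : R) (u : X -> R) (f : X -> R) : Prop := Fspace p (wu Xn P u) f.

End MarkovSetting.

From HB Require Import structures.
From mathcomp Require Import all_boot all_order all_algebra.
From mathcomp Require Import all_classical all_reals all_analysis measurable_realfun.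
From mathcomp Require Import giry ring lra.
Import Order.TTheory GRing.Theory Num.Theory.
Import numFieldNormedType.Exports.
Local Open Scope classical_set_scope.
Local Open Scope ring_scope.

(* With w := u - Pu + B_u >= 1, integrating the identity w + Pu = u + B_u along
   the chain (Markov property) gives E_x w(X_n) + E_x u(X_(n+1)) = E_x u(X_n) + B_u.
   Summation by parts against the nonincreasing weights k_n = n^-(1+alpha), whose
   series converges, then bounds sum_n k_n E_x w(X_n) by E_x u(X_1) + |B_u|(1 + 1/alpha).
   So sum_n k_n w(X_n) is P_x-integrable: its terms tend to 0 a.s. and in L^1, and
   |f| <= C w transfers this to k_n f(X_n). *)

Section inv_powR_series.
Context {R : realType} {a : R}.
Hypothesis a_gt0 : 0 < a.

Lemma inv_powR_diff_ge (m : nat) :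
  a * ((m.+2%:R) `^ (1 + a))^-1 <= ((m.+1%:R) `^ a)^-1 - ((m.+2%:R) `^ a)^-1.
Proof.
(* ((m+2)/(m+1))^a >= 1 + a ln ((m+2)/(m+1)) >= 1 + a/(m+2) *)
have r_gt0 : (0 : R) < m.+1%:R by rewrite ltr0n.
have s_gt0 : (0 : R) < m.+2%:R by rewrite ltr0n.
have powRE (x y : R) : 0 < x -> (x `^ y)^-1 = expR (- (y * ln x)).
  by move=> x_gt0; rewrite /powR gt_eqF// expRN.
rewrite !powRE//.
set A := ln (m.+1%:R : R); set B := ln (m.+2%:R : R).
have lnBA : (m.+2%:R)^-1 <= B - A.
  rewrite /A /B -ln_div ?posrE// -[leRHS]opprK -lnV ?posrE ?divr_gt0// invf_div.
  have -> : (m.+1%:R / m.+2%:R : R) = 1 + - (m.+2%:R)^-1 by field; rewrite gt_eqF.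
  rewrite lerNr le_ln1Dx// ltrN2 invf_lt1// ltr1n//.
have expB : expR (- ((1 + a) * B)) = expR (- (a * B)) * (m.+2%:R)^-1.
  by rewrite -[X in _ * X^-1](lnK s_gt0) -expRN -expRD; congr expR; rewrite /B; ring.
have expA : expR (- (a * A)) = expR (- (a * B)) * expR (a * (B - A)).
  by rewrite -expRD; congr expR; ring.
rewrite expB expA mulrCA -[X in _ <= _ - X]mulr1 -mulrBr ler_pM2l ?expR_gt0//.
rewrite lerBrDl (le_trans _ (expR_ge1Dx _))// lerD2l ler_pM2l//.
Qed.

Lemma sum_inv_powR_le (N : nat) :
  \sum_(m < N) ((m.+1%:R) `^ (1 + a))^-1 <= 1 + a^-1.
Proof.
have telescope n : a * \sum_(m < n) ((m.+2%:R) `^ (1 + a))^-1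
    <= 1 - ((n.+1%:R) `^ a)^-1.
  elim: n => [|n IHn]; first by rewrite big_ord0 mulr0 powR1 invr1 subrr.
  rewrite big_ord_recr /= mulrDr.
  have := inv_powR_diff_ge n; lra.
case: N => [|N]; first by rewrite big_ord0 addr_ge0// invr_ge0 ltW.
rewrite big_ord_recl /= powR1 invr1 lerD2l -(ler_pM2l a_gt0) mulfV ?gt_eqF//.
under eq_bigr do rewrite /bump /=.
have := telescope N; have := powR_gt0 a (ltr0n R N.+1).
rewrite -invr_gt0; lra.
Qed.

End inv_powR_series.

Section real_series.
Context {R : realType}.

Lemma summation_by_parts_le (c V G : nat -> R) (b : R) :
  (forall m, c m.+1 <= c m) -> (forall m, 0 <= c m) -> (forall m, 0 <= V m) ->
  (forall m, G m + V m.+1 = V m + b) ->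
  forall N, \sum_(m < N) c m * G m <= c 0%N * V 0%N + `|b| * \sum_(m < N) c m.
Proof.
move=> c_noninc c_ge0 V_ge0 GV N.
suff sum_le : \sum_(m < N) c m * G m + c N * V N <=
    c 0%N * V 0%N + b * \sum_(m < N) c m.
  have := mulr_ge0 (c_ge0 N) (V_ge0 N).
  have : b * \sum_(m < N) c m <= `|b| * \sum_(m < N) c m.
    by rewrite ler_wpM2r ?ler_norm// sumr_ge0.
  lra.
elim: N => [|n IHn]; first by rewrite !big_ord0; lra.
rewrite !big_ord_recr /=.
have : c n.+1 * V n.+1 <= c n * V n.+1 by rewrite ler_wpM2r.
have -> : c n * G n = c n * V n + b * c n - c n * V n.+1.
  have -> : G n = V n + b - V n.+1 by have := GV n; lra.
  ring.
lra.
Qed.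

Lemma bounded_nneg_series_cvg0 (a : nat -> R) (M : R) :
  (forall n, 0 <= a n) -> (forall N, \sum_(n < N) a n <= M) ->
  a n @[n --> \oo] --> 0.
Proof.
move=> a_ge0 sum_le; apply: cvg_series_cvg_0; apply: nondecreasing_is_cvgn.
  by apply/nondecreasing_seqP => n; rewrite /series /= big_nat_recr//= lerDl.
by exists M => _ [n _ <-]; rewrite /series /= big_mkord.
Qed.

End real_series.

Lemma integralD_cst d (Om : measurableType d) (R : realType)
    (mu : probability Om R) (g : Om -> R) (c : R) :
  measurable_fun setT g -> (forall w, 0 <= g w) -> (forall w, 0 <= g w + c) ->
  (\int[mu]_w (g w + c)%:E = \int[mu]_w (g w)%:E + c%:E)%E.
Proof.
move=> mg g_ge0 gc_ge0.
have integral_cst1 (r : R) : (\int[mu]_w r%:E = r%:E)%E.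
  rewrite integral_cst// -[RHS]mule1; congr (_ * _)%E; exact: probability_setT.
have [c_ge0|c_lt0] := leP 0 c.
  under eq_integral do rewrite EFinD.
  rewrite ge0_integralD ?integral_cst1//; last exact/measurable_EFinP.
  by move=> w _; rewrite lee_fin.
have -> : (\int[mu]_w (g w)%:E = \int[mu]_w ((g w + c)%:E + (- c)%:E))%E.
  by apply: eq_integral => w _; rewrite -EFinD addrK.
rewrite ge0_integralD//.
- by rewrite integral_cst1 -addeA -EFinD addNr adde0.
- by move=> w _; rewrite lee_fin.
- by apply/measurable_EFinP; apply: measurable_funD => //; exact: measurable_cst.
- by move=> w _; rewrite lee_fin; lra.
Qed.

Section summable_integrals.
Context {d} {Om : measurableType d} {R : realType}
  {mu : {measure set Om -> \bar R}}.
Context {h : nat -> Om -> R} {a : nat -> R} {M : R}.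
Hypothesis mh : forall n, measurable_fun setT (h n).
Hypothesis h_ge0 : forall n w, 0 <= h n w.
Hypothesis integral_h : forall n, (\int[mu]_w (h n w)%:E = (a n)%:E)%E.
Hypothesis sum_a_le : forall N, \sum_(n < N) a n <= M.

Let a_ge0 n : 0 <= a n.
Proof. by rewrite -lee_fin -integral_h; apply: integral_ge0 => w _; rewrite lee_fin. Qed.

Lemma summable_integrals_cvg0_ae : {ae mu, forall w, h n w @[n --> \oo] --> 0}.
Proof.
have mhE n : measurable_fun setT (fun w => (h n w)%:E) by exact/measurable_EFinP.
have hE_ge0 n w : (0 <= (h n w)%:E)%E by rewrite lee_fin.
pose F w := (\sum_(0 <= n <oo) (h n w)%:E)%E.
have mF : measurable_fun setT F by apply: ge0_emeasurable_sum => // n w _ _.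
have integral_F : (\int[mu]_w F w <= M%:E)%E.
  rewrite /F integral_nneseries//.
  rewrite (eq_eseriesr (g := fun n => (a n)%:E)); last by move=> n _.
  apply: lime_le; first by apply: is_cvg_nneseries => n _ _; rewrite lee_fin.
  by apply: nearW => N; rewrite sumEFin lee_fin big_mkord.
have intF : mu.-integrable setT F.
  apply/integrableP; split => //.
  under eq_integral do rewrite gee0_abs ?nneseries_ge0//.
  exact: le_lt_trans integral_F (ltry _).
apply: filterS (integrable_ae measurableT intF) => w /(_ I) Fw_fin.
apply: (@bounded_nneg_series_cvg0 _ _ (fine (F w))) => // N.
rewrite -lee_fin fineK// -sumEFin -(big_mkord xpredT (fun n => (h n w)%:E)).
exact: nneseries_lim_ge.
Qed.

Context {g : nat -> Om -> R} {C : R}.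
Hypothesis mg : forall n, measurable_fun setT (g n).
Hypothesis C_ge0 : 0 <= C.
Hypothesis g_le : forall n w, `|g n w| <= C * h n w.

Let integral_g_le n : (\int[mu]_w (`|g n w|)%:E <= (C * a n)%:E)%E.
Proof.
rewrite EFinM -integral_h -ge0_integralZl//; last 2 first.
- exact/measurable_EFinP.
- by move=> w _; rewrite lee_fin.
apply: ge0_le_integral => //.
- by apply/measurable_EFinP; apply: measurableT_comp.
- by apply: measurable_funeM; exact/measurable_EFinP.
- by move=> w _; rewrite -EFinM lee_fin.
Qed.

Lemma dominated_summable_cvg0 :
  [/\ {ae mu, forall w, g n w @[n --> \oo] --> 0},
      (forall n, mu.-integrable setT (fun w => (g n w)%:E)) &
      (\int[mu]_w (`|g n w|)%:E)%E @[n --> \oo] --> 0%E].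
Proof.
split.
- apply: filterS summable_integrals_cvg0_ae => w hw_cvg0.
  apply: (@squeeze_cvgr _ _ _ _ (fun n => - (C * h n w)) (fun n => C * h n w)).
  + by apply: nearW => n; rewrite -ler_norml.
  + by rewrite -oppr0 -(mulr0 C); apply: cvgN; exact: cvgMr.
  + by rewrite -(mulr0 C); exact: cvgMr.
- move=> n; apply/integrableP; split; first exact/measurable_EFinP.
  under eq_integral do rewrite abse_EFin.
  exact: le_lt_trans (integral_g_le n) (ltry _).
- apply: (@squeeze_cvge _ _ _ _ (fun=> 0%E) _ (fun n => (C * a n)%:E)).
  + apply: nearW => n; rewrite integral_g_le andbT.
    by apply: integral_ge0 => w _; rewrite lee_fin.
  + exact: cvg_cst.
  + apply: cvg_EFin; first exact: nearW.
    rewrite -(mulr0 C); apply: cvgMr.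
    exact: bounded_nneg_series_cvg0 a_ge0 sum_a_le.
Qed.

End summable_integrals.

Section markov_chain.
Local Open Scope ereal_scope.
Context {R : realType} {T : completePseudoMetricType R}
  {dO : measure_display} {Om : measurableType dO}
  {Xn : nat -> Om -> borelT T} {theta : Om -> Om}
  {P : borelT T -> probability Om R}.
Hypothesis chainP : markov_chain Xn theta P.

Lemma measurable_Xn n : measurable_fun setT (Xn n).
Proof. by case: chainP => -[]. Qed.

Lemma XnS_shift n w : Xn n.+1 w = Xn 1 (iter n theta w).
Proof.
case: chainP => _ shiftX _ _ _.
by elim: n w => [//|n IHn] w; rewrite shiftX IHn iterSr.
Qed.

Let measurable_K_ev B : measurable B ->
  measurable_fun setT (fun y => P y (Xn 1 @^-1` B)).
Proof.
move=> mB; case: chainP => _ _ _ + _; apply.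
by rewrite -[X in measurable X]setTI; exact: measurable_Xn.
Qed.

Let K y : giry (borelT T) R := giry_map (measurable_Xn 1) (P y).

Let measurable_K : measurable_fun setT K.
Proof. by apply: measurable_giry_codensity => // B /measurable_K_ev. Qed.

Lemma markov_integral n x (g : borelT T -> \bar R) :
  (forall y, 0 <= g y) -> measurable_fun setT g ->
  \int[P x]_w g (Xn n.+1 w) = \int[P x]_w \int[P (Xn n w)]_v g (Xn 1 v).
Proof.
move=> g0 mg.
pose mu : giry (borelT T) R := giry_map (measurable_Xn n) (P x).
have bindE B : measurable B ->
    giry_bind mu measurable_K B = P x (Xn n.+1 @^-1` B).
  move=> mB.
  transitivity (\int[giry_bind mu measurable_K]_y (\1_B y)%:E).
    by rewrite integral_indic// setIT.
  have := @giry_int_bind _ _ _ _ _ mu _ measurable_K (fun y => (\1_B y)%:E).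
  rewrite /giry_int => ->//; last by apply/measurable_EFinP; exact: measurable_indic.
  under eq_integral => y _ do rewrite integral_indic// setIT.
  rewrite /mu /= ge0_integral_pushforward //=; last 3 first.
  - exact: measurable_Xn.
  - exact: measurable_K_ev.
  - by move=> y _; exact: measure_ge0 (P y) _.
  have -> : Xn n.+1 @^-1` B = setT `&` iter n theta @^-1` (Xn 1 @^-1` B).
    by rewrite setTI; apply/funext => w; rewrite /preimage /= XnS_shift.
  case: chainP => _ _ _ _ ->//.
  - by rewrite -setC0; apply: sigma_algebraC; exact: sigma_algebra0.
  - by rewrite -[X in measurable X]setTI; exact: measurable_Xn.
transitivity (\int[giry_map (measurable_Xn n.+1) (P x)]_y g y).
  by rewrite ge0_integral_pushforward//; exact: measurable_Xn.
rewrite (eq_measure_integral (giry_bind mu measurable_K)); last first.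
  by move=> B mB _; exact: esym (bindE B mB).
have := @giry_int_bind _ _ _ _ _ mu _ measurable_K g mg g0.
rewrite /giry_int => ->.
rewrite /mu /= ge0_integral_pushforward //=.
- apply: eq_integral => w _; rewrite ge0_integral_pushforward//.
  exact: measurable_Xn.
- exact: measurable_Xn.
- exact: measurableT_comp (measurable_giry_int mg g0) measurable_K.
- by move=> y _; apply: (@integral_ge0 _ _ _ (K y)) => z _.
Qed.

Section drift.
Context {tau : Om -> option nat} {u : borelT T -> R}.
Hypothesis driftP : drift_function Xn tau P u.

Local Notation Pu y := (fine (Pop Xn P u y)).
Local Notation b := (fine (Bu Xn P u)).
Local Notation w := (wu Xn P u).

Lemma drift_ge1 y : (1 <= u y)%R.
Proof. by case: driftP => -[]. Qed.

Lemma measurable_drift : measurable_fun setT u.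
Proof. by case: driftP => -[]. Qed.

Let drift_ge0 y : (0 <= u y)%R.
Proof. exact: le_trans ler01 (drift_ge1 y). Qed.

Lemma Pop_drift_ge0 y : 0 <= Pop Xn P u y.
Proof. by apply: integral_ge0 => v _; rewrite lee_fin. Qed.

Lemma Pop_driftE y : Pop Xn P u y = (Pu y)%:E.
Proof.
case: driftP => _ [c u_sub_Pu_ge] _ _ _.
move: (u_sub_Pu_ge y) (Pop_drift_ge0 y).
by case: (Pop Xn P u y).
Qed.

Lemma Pop_drift_sub_le y : (Pu y - u y <= b - 1)%R.
Proof.
case: driftP => _ [c u_sub_Pu_ge] _ _ _.
have sup_le : ereal_sup (range (fun y => Pop Xn P u y - (u y)%:E)) <= (- c)%:E.
  apply: ub_ereal_sup => _ [z _ <-].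
  by rewrite Pop_driftE -EFinB lee_fin lerNr opprB -lee_fin EFinB -Pop_driftE.
have le_sup : (Pu y - u y)%:E <= ereal_sup (range (fun y => Pop Xn P u y - (u y)%:E)).
  by apply: ereal_sup_ubound; exists y => //; rewrite Pop_driftE.
rewrite /Bu; move: sup_le le_sup.
case: (ereal_sup _) => [r| |]//= _; rewrite lee_fin; lra.
Qed.

Lemma wu_ge1 y : (1 <= w y)%R.
Proof. by rewrite /wu; have := Pop_drift_sub_le y; lra. Qed.

Let wu_ge0 y : (0 <= w y)%R.
Proof. exact: le_trans ler01 (wu_ge1 y). Qed.

Lemma measurable_Pop_drift : measurable_fun setT (fun y => Pu y).
Proof.
apply: measurableT_comp; first exact: fine_measurable.
apply: (measurable_fun_integral_kernel (l := P)).
- by case: chainP.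
- by move=> v; rewrite lee_fin.
- apply/measurable_EFinP; apply: measurableT_comp; first exact: measurable_drift.
  exact: measurable_Xn.
Qed.

Lemma measurable_wu : measurable_fun setT w.
Proof.
apply: measurable_funD; last exact: measurable_cst.
apply: measurable_funB; [exact: measurable_drift|exact: measurable_Pop_drift].
Qed.

Lemma drift_recurrence x n :
  \int[P x]_v (w (Xn n v))%:E + \int[P x]_v (u (Xn n.+1 v))%:E =
  \int[P x]_v (u (Xn n v))%:E + b%:E.
Proof.
rewrite (markov_integral n x (fun y => (u y)%:E)); last 2 first.
- by move=> y; rewrite lee_fin.
- by apply/measurable_EFinP; exact: measurable_drift.
have -> : \int[P x]_v \int[P (Xn n v)]_z (u (Xn 1 z))%:E =
    \int[P x]_v (Pu (Xn n v))%:E.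
  by apply: eq_integral => v _; rewrite -Pop_driftE.
rewrite -ge0_integralD//; last 4 first.
- by move=> v _; rewrite lee_fin.
- apply/measurable_EFinP.
  by apply: measurableT_comp; [exact: measurable_wu|exact: measurable_Xn].
- by move=> v _; rewrite -Pop_driftE Pop_drift_ge0.
- exact/measurable_EFinP/(measurableT_comp measurable_Pop_drift (measurable_Xn n)).
rewrite -integralD_cst.
- by apply: eq_integral => v _; rewrite -EFinD /wu; congr EFin; ring.
- by apply: measurableT_comp; [exact: measurable_drift|exact: measurable_Xn].
- by [].
- move=> v; have := wu_ge1 (Xn n v); have := Pop_drift_ge0 (Xn n v).
  by rewrite Pop_driftE lee_fin /wu; lra.
Qed.

Section weighted_sum.
Context {alpha : R}.
Hypothesis alpha_gt0 : (0 < alpha)%R.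
Variable x : borelT T.

Local Notation k n := ((n%:R `^ (1 + alpha))^-1)%R.
Local Notation EU n := (\int[P x]_v (u (Xn n v))%:E).
Local Notation EW n := (\int[P x]_v (w (Xn n v))%:E).

Let k_ge0 n : (0 <= k n)%R.
Proof. by rewrite invr_ge0 powR_ge0. Qed.

Let k0 : k 0 = 0%R.
Proof. by rewrite powR0 ?invr0// gt_eqF// ltr_wpDr ?ltW. Qed.

Let k_nonincreasing m : (k m.+2 <= k m.+1)%R.
Proof.
rewrite lef_pV2 ?posrE ?powR_gt0 ?ltr0n// ge0_ler_powR ?nnegrE ?ler_nat//.
by rewrite addr_ge0// ltW.
Qed.

Let EU_ge0 n : 0 <= EU n.
Proof. by apply: integral_ge0 => v _; rewrite lee_fin. Qed.

Let EW_ge0 n : 0 <= EW n.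
Proof. by apply: integral_ge0 => v _; rewrite lee_fin. Qed.

Lemma drift_integrals_fin n : EU n.+1 \is a fin_num /\ EW n.+1 \is a fin_num.
Proof.
(* [EW m + EU m.+1 = EU m + b] with nonnegative terms propagates finiteness *)
have fin_step m : EU m \is a fin_num -> EW m \is a fin_num /\ EU m.+1 \is a fin_num.
  move=> EU_fin; have : EU m + b%:E \is a fin_num by rewrite fin_numD EU_fin.
  have EW0 := EW_ge0 m; have EU0 := EU_ge0 m.+1.
  rewrite -drift_recurrence (ge0_fin_numE (adde_ge0 EW0 EU0)) => sum_lt.
  rewrite (ge0_fin_numE EW0) (ge0_fin_numE EU0); split.
  - exact: le_lt_trans (leeDl _ EU0) sum_lt.
  - by apply: le_lt_trans sum_lt; rewrite addeC leeDl.
elim: n => [|n [EU_fin _]].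
  have EU1_fin : EU 1 \is a fin_num by rewrite -/(Pop Xn P u x) Pop_driftE.
  by split => //; case: (fin_step 1%N EU1_fin).
have [_ EU2_fin] := fin_step n.+1 EU_fin.
by split => //; case: (fin_step n.+2 EU2_fin).
Qed.

Lemma weighted_drift_sum_le N :
  (\sum_(n < N) k n * fine (EW n) <= fine (EU 1) + `|b| * (1 + alpha^-1))%R.
Proof.
have EU1_ge0 : (0 <= fine (EU 1))%R by rewrite fine_ge0.
have recurrence m : (fine (EW m.+1) + fine (EU m.+2) = fine (EU m.+1) + b)%R.
  have [EU_fin EW_fin] := drift_integrals_fin m.
  have [EU2_fin _] := drift_integrals_fin m.+1.
  by rewrite -fineD// drift_recurrence fineD.
case: N => [|N].
  by rewrite big_ord0 addr_ge0// mulr_ge0// addr_ge0 ?invr_ge0 ?ltW.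
rewrite big_ord_recl /= k0 mul0r add0r.
under eq_bigr do rewrite /bump /=.
have := @summation_by_parts_le R (fun m => k m.+1) (fun m => fine (EU m.+1))
  (fun m => fine (EW m.+1)) b k_nonincreasing (fun m => k_ge0 m.+1)
  (fun m => fine_ge0 (EU_ge0 m.+1)) recurrence N.
rewrite /= powR1 invr1 mul1r => /le_trans; apply.
by rewrite lerD2l ler_wpM2l// sum_inv_powR_le.
Qed.

Lemma integral_weighted_wu n :
  \int[P x]_v (k n * w (Xn n v))%:E = (k n * fine (EW n))%:E.
Proof.
under eq_integral do rewrite EFinM.
rewrite ge0_integralZl//; last 2 first.
- apply/measurable_EFinP.
  by apply: measurableT_comp; [exact: measurable_wu|exact: measurable_Xn].
- by move=> v _; rewrite lee_fin.
case: n => [|n]; first by rewrite k0 mul0e mul0r.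
by have [_ EW_fin] := drift_integrals_fin n; rewrite -{1}(fineK EW_fin).
Qed.

End weighted_sum.
End drift.
End markov_chain.

Theorem mainTheorem17 (R : realType) (T : completePseudoMetricType R)
  (dO : measure_display) (Om : measurableType dO)
  (Xn : nat -> Om -> borelT T) (theta : Om -> Om)
  (P : borelT T -> probability Om R) (tau : Om -> option nat)
  (u : borelT T -> R) (alpha : R) (f : borelT T -> R) :
  hausdorff_space T -> separable_space T ->
  markov_chain Xn theta P ->
  stopping_time Xn tau -> theta_compatible theta tau P ->
  (forall x, (Etau tau P x < +oo)%E) ->
  drift_function Xn tau P u ->
  0 < alpha ->
  Espace Xn P 1 u f ->
  forall x : borelT T,
    {ae P x, forall w,
       (fun n : nat => (n%:R `^ (1 + alpha))^-1 * f (Xn n w)) @ \oo --> 0}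
    /\ (forall n : nat, (P x).-integrable setT
          (fun w => ((n%:R `^ (1 + alpha))^-1 * f (Xn n w))%:E))
    /\ (fun n : nat =>
          (\int[P x]_w (`|(n%:R `^ (1 + alpha))^-1 * f (Xn n w)|)%:E)%E)
         @ \oo --> 0%E.
Proof.
move=> _ _ chainP _ _ _ driftP alpha_gt0 [mf [C f_le]] x.
have {}f_le y : `|f y| <= C * wu Xn P u y by rewrite -[leLHS]powRr1.
have C_ge0 : 0 <= C.
  have := f_le x; have := wu_ge1 driftP x; have := normr_ge0 (f x); nra.
pose k n : R := (n%:R `^ (1 + alpha))^-1.
have k_ge0 n : 0 <= k n by rewrite invr_ge0 powR_ge0.
have mkwu n : measurable_fun setT (fun w => k n * wu Xn P u (Xn n w)).
  apply: measurable_funM; first exact: measurable_cst.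
  exact: measurableT_comp (measurable_wu chainP driftP) (measurable_Xn chainP n).
have kwu_ge0 n w : 0 <= k n * wu Xn P u (Xn n w).
  by rewrite mulr_ge0// (le_trans ler01 (wu_ge1 driftP _)).
have mkf n : measurable_fun setT (fun w => k n * f (Xn n w)).
  apply: measurable_funM; first exact: measurable_cst.
  exact: measurableT_comp mf (measurable_Xn chainP n).
have kf_le n w : `|k n * f (Xn n w)| <= C * (k n * wu Xn P u (Xn n w)).
  by rewrite normrM ger0_norm// mulrCA ler_wpM2l.
by case: (dominated_summable_cvg0 mkwu kwu_ge0
  (integral_weighted_wu chainP driftP alpha_gt0 x)
  (weighted_drift_sum_le chainP driftP alpha_gt0 x) mkf C_ge0 kf_le).
Qed.
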